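(* There is an absolute constant $c>0$ such that for all finite nonempty sets $\mathcal{A},\mathcal{B},\mathcal{C}$ of nonzero complex numbers, $$|\mathcal{A}\mathcal{C}+\mathcal{A}\mathcal{C}|\,|\mathcal{B}\mathcal{C}+\mathcal{B}\mathcal{C}|\geq c\,|\mathcal{A}/\mathcal{B}|\,|\mathcal{C}|^2.$$
   Context: For finite sets $X,Y\subset\mathbb{C}$, $X+Y:=\{x+y:x\in X,y\in Y\}$, $XY:=\{xy:x\in X,y\in Y\}$, and for $0\notin Y$, $X/Y:=\{x/y:x\in X,y\in Y\}$. *)

From Stdlib Require Import Reals List.
Import ListNotations.
Open Scope R_scope.

Definition Cx : Type := (R * R)%type.

Definition C0 : Cx := (0, 0).
Definition Cadd (x y : Cx) : Cx := (fst x + fst y, snd x + snd y).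
Definition Cmul (x y : Cx) : Cx :=
  (fst x * fst y - snd x * snd y, fst x * snd y + snd x * fst y).
Definition Cinv (x : Cx) : Cx :=
  let d := fst x * fst x + snd x * snd x in (fst x / d, - snd x / d).
Definition Cdiv (x y : Cx) : Cx := Cmul x (Cinv y).

Definition Cx_eq_dec (x y : Cx) : {x = y} + {x <> y}.
Proof.
  destruct x as [a b], y as [c d].
  destruct (Req_EM_T a c) as [H1|H1]; destruct (Req_EM_T b d) as [H2|H2];
    subst; [left; reflexivity | right | right | right]; intro H; inversion H; auto.
Defined.

(* Finite sets of complex numbers are represented by lists (duplicates allowed);
   the set denoted by l is {x | In x l}, its cardinality is the number of
   distinct entries. *)
Definition card (l : list Cx) : nat := length (nodup Cx_eq_dec l).

Definition sumset (X Y : list Cx) : list Cx :=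
  map (fun p => Cadd (fst p) (snd p)) (list_prod X Y).
Definition prodset (X Y : list Cx) : list Cx :=
  map (fun p => Cmul (fst p) (snd p)) (list_prod X Y).
Definition quotset (X Y : list Cx) : list Cx :=
  map (fun p => Cdiv (fst p) (snd p)) (list_prod X Y).

From Pilot Require Import Defs.
From Stdlib Require Import Reals List Lia Lra Psatz.
From Coquelicot Require Import Rcomplements Complex.
Import ListNotations.
Open Scope R_scope.

(* Choose pairs (a, b) in A x B, one for each element a/b of A/B.  Keeping the
   largest octant class of the denominators b, and of C, loses factors 8 and 8^2;
   afterwards any two b's, and any two c's, make an angle of at most pi/4, so b c and
   b' c' make an acute angle.  Pair each (a, b) with the (a', b') whose quotient is
   nearest to a/b and send (c, c') to (a c + a' c', b c + b' c') in
   (AC + AC) x (BC + BC).  This is injective in (c, c'), and the quotient of the two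
   coordinates is at least as near to a/b as a'/b' is.  Hence a point has at most 9
   preimages: the corresponding quotients are nearer to one point z than to each
   other, so one of them may be z and the others lie in distinct octants around z.
   Double counting gives |A/B| |C|^2 <= 8 * 64 * 9 |AC + AC| |BC + BC|. *)

Lemma NoDup_list_prod {X Y : Type} (l1 : list X) (l2 : list Y) :
  NoDup l1 -> NoDup l2 -> NoDup (list_prod l1 l2).
Proof.
  induction l1 as [|x l1 IH]; intros h1 h2; simpl; [constructor|].
  inversion h1 as [|? ? Hx Hl1]; subst. apply NoDup_app.
  - apply NoDup_map_NoDup_ForallPairs; auto. intros y y' _ _ E; injection E; auto.
  - apply IH; auto.
  - intros p Hp Hp'. apply in_map_iff in Hp as [y [<- _]].
    apply in_prod_iff in Hp' as [Hx' _]. contradiction.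
Qed.

Lemma NoDup_map_filter {X Y : Type} (f : X -> Y) (P : X -> bool) (l : list X) :
  NoDup (map f l) -> NoDup (map f (filter P l)).
Proof.
  induction l as [|x l IH]; simpl; intro H; auto.
  inversion H as [|? ? Hx Hl]; subst. destruct (P x); simpl; auto. constructor; auto.
  intro Hin. apply Hx. apply in_map_iff in Hin as [y [<- Hy]].
  apply filter_In in Hy as [Hy _]. apply in_map; auto.
Qed.

Lemma exists_transversal {X Y : Type} (dec : forall y y' : Y, {y = y'} + {y <> y'})
    (f : X -> Y) (l : list X) :
  exists t, incl t l /\ NoDup (map f t) /\ length t = length (nodup dec (map f l)).
Proof.
  induction l as [|x l [t [Ht [Hnd Hlen]]]].
  - exists []. repeat split; [intros ? []|constructor].
  - simpl. destruct in_dec as [Hin|Hin].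
    + exists t. repeat split; auto. intros y Hy; right; auto.
    + exists (x :: t). repeat split; simpl; auto.
      * intros y [<-|Hy]; [left|right]; auto.
      * constructor; auto. intro Hxt. apply Hin.
        apply in_map_iff in Hxt as [y [<- Hy]]. apply in_map; auto.
Qed.

Lemma length_filter_filter_le {X : Type} (f g : X -> bool) (l : list X) :
  (length (filter f (filter g l)) <= length (filter f l))%nat.
Proof.
  induction l as [|x l IH]; simpl; auto.
  destruct (g x); simpl; destruct (f x); simpl; lia.
Qed.

Lemma pigeonhole_filter {X : Type} (k : nat) (f : X -> nat) (l : list X) :
  (forall x, In x l -> (f x < k)%nat) ->
  exists j, (length l <= k * length (filter (fun x => Nat.eqb (f x) j) l))%nat.
Proof.
  revert l; induction k as [|k IH]; intros l Hf.
  - exists O. destruct l as [|x l]; simpl; [lia|]. specialize (Hf x (or_introl eq_refl)); lia.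
  - set (l' := filter (fun x => negb (Nat.eqb (f x) k)) l).
    destruct (IH l') as [j Hj].
    { intros x Hx. apply filter_In in Hx as [Hx Hk].
      apply Bool.negb_true_iff, Nat.eqb_neq in Hk. specialize (Hf x Hx); lia. }
    pose proof (filter_length (fun x => Nat.eqb (f x) k) l) as Hsplit.
    pose proof (length_filter_filter_le (fun x => Nat.eqb (f x) j)
                  (fun x => negb (Nat.eqb (f x) k)) l) as Hsub.
    cbv beta in Hsplit. fold l' in Hsplit, Hsub.
    set (nk := length (filter (fun x => Nat.eqb (f x) k) l)) in *.
    set (nj := length (filter (fun x => Nat.eqb (f x) j) l)) in *.
    destruct (Nat.le_gt_cases nj nk); [exists k | exists j]; fold nk nj; nia.
Qed.

Lemma double_counting {X Y : Type} (g : X -> Y -> bool) (lx : list X) (ly : list Y) :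
  list_sum (map (fun x => length (filter (g x) ly)) lx) =
  list_sum (map (fun y => length (filter (fun x => g x y) lx)) ly).
Proof.
  induction lx as [|x lx IH]; simpl.
  - induction ly; simpl; auto.
  - rewrite IH. clear IH. induction ly as [|y ly IHy]; simpl; auto.
    destruct (g x y); simpl; lia.
Qed.

Definition memb {Y : Type} (dec : forall y y' : Y, {y = y'} + {y <> y'}) (y : Y) (l : list Y) :
  bool := if in_dec dec y l then true else false.

Lemma length_filter_memb {Y : Type} (dec : forall y y' : Y, {y = y'} + {y <> y'})
    (l ly : list Y) :
  NoDup l -> NoDup ly -> incl l ly -> length l = length (filter (fun y => memb dec y l) ly).
Proof.
  unfold memb; intros Hl Hly Hincl. apply Nat.le_antisymm.
  - apply NoDup_incl_length; auto. intros y Hy. apply filter_In.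
    destruct in_dec; auto.
  - apply NoDup_incl_length; [apply NoDup_filter; auto|].
    intros y Hy. apply filter_In in Hy as [_ Hy]. destruct in_dec; auto; discriminate.
Qed.

Lemma list_sum_map_le {X : Type} (F : X -> nat) (m : nat) (l : list X) :
  (forall x, In x l -> (F x <= m)%nat) -> (list_sum (map F l) <= m * length l)%nat.
Proof.
  induction l as [|x l IH]; intro H; simpl; [lia|].
  specialize (H x (or_introl eq_refl)) as Hx.
  assert (list_sum (map F l) <= m * length l)%nat by (apply IH; intros; apply H; right; auto).
  lia.
Qed.

Lemma list_sum_map_const {X : Type} (F : X -> nat) (n : nat) (l : list X) :
  (forall x, In x l -> F x = n) -> list_sum (map F l) = (length l * n)%nat.
Proof.
  induction l as [|x l IH]; intro H; simpl; auto.
  rewrite (H x (or_introl eq_refl)), IH by (intros; apply H; right; auto). lia.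
Qed.

Lemma incidence_bound {X Y : Type} (dec : forall y y' : Y, {y = y'} + {y <> y'})
    (img : X -> list Y) (lx : list X) (ly : list Y) (n m : nat) :
  NoDup ly ->
  (forall x, In x lx -> NoDup (img x) /\ incl (img x) ly /\ length (img x) = n) ->
  (forall y, In y ly -> (length (filter (fun x => memb dec y (img x)) lx) <= m)%nat) ->
  (length lx * n <= m * length ly)%nat.
Proof.
  intros Hly Himg Hmult.
  rewrite <- (list_sum_map_const (fun x => length (img x)) n lx)
    by (intros x Hx; apply Himg; auto).
  rewrite (map_ext_in _ (fun x => length (filter (fun y => memb dec y (img x)) ly)))
    by (intros x Hx; destruct (Himg x Hx) as [? [? _]]; apply length_filter_memb; auto).
  rewrite double_counting. apply list_sum_map_le; auto.
Qed.

Lemma Defs_Cdiv_eq (x y : C) : Defs.Cdiv x y = (x / y)%C.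
Proof.
  destruct x as [a b], y as [c d].
  unfold Defs.Cdiv, Defs.Cinv, Cmul, Cdiv, Cinv, Cmult; simpl. rewrite !Rmult_1_r. reflexivity.
Qed.

Lemma Cmult_integral_l (x y : C) : x <> 0 -> (x * y)%C = 0 -> y = 0.
Proof.
  intros Hx Hxy. replace y with (/ x * (x * y))%C by (field; exact Hx).
  rewrite Hxy. ring.
Qed.

Definition Cnorm2 (w : C) : R := fst w * fst w + snd w * snd w.
Definition Cdot (w w' : C) : R := fst w * fst w' + snd w * snd w'.
Definition Ccross (w w' : C) : R := snd w * fst w' - fst w * snd w'.

Lemma Cnorm2_0 : Cnorm2 0 = 0.
Proof. unfold Cnorm2; simpl; ring. Qed.

Lemma Cnorm2_nonneg (w : C) : 0 <= Cnorm2 w.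
Proof. unfold Cnorm2; nra. Qed.

Lemma Cnorm2_pos (w : C) : w <> 0 -> 0 < Cnorm2 w.
Proof.
  destruct w as [x y]; unfold Cnorm2; simpl; intro Hw.
  destruct (Req_dec x 0), (Req_dec y 0); subst; [now elim Hw | nra ..].
Qed.

Lemma Cnorm2_opp (w : C) : Cnorm2 (- w) = Cnorm2 w.
Proof. destruct w; unfold Cnorm2; simpl; ring. Qed.

Lemma Cnorm2_mul (w w' : C) : Cnorm2 (w * w') = Cnorm2 w * Cnorm2 w'.
Proof. destruct w, w'; unfold Cnorm2; simpl; ring. Qed.

Lemma Cnorm2_add (w w' : C) : Cnorm2 (w + w') = Cnorm2 w + Cnorm2 w' + 2 * Cdot w w'.
Proof. destruct w, w'; unfold Cnorm2, Cdot; simpl; ring. Qed.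

Lemma Cnorm2_sub (w w' : C) : Cnorm2 (w' - w) = Cnorm2 w + Cnorm2 w' - 2 * Cdot w w'.
Proof. destruct w, w'; unfold Cnorm2, Cdot, Cminus, Cplus, Copp; simpl; ring. Qed.

Lemma Cdot_Ccross_sq (w w' : C) :
  Cdot w w' * Cdot w w' + Ccross w w' * Ccross w w' = Cnorm2 w * Cnorm2 w'.
Proof. destruct w, w'; unfold Cnorm2, Cdot, Ccross; simpl; ring. Qed.

Lemma Cdot_mul (b b' c c' : C) :
  Cdot (b * c) (b' * c') = Cdot b b' * Cdot c c' - Ccross b b' * Ccross c c'.
Proof. destruct b, b', c, c'; unfold Cdot, Ccross; simpl; ring. Qed.

(* The angle between [w] and [w'] is at most pi/4. *)
Definition narrow (w w' : C) : Prop := Rabs (Ccross w w') <= Cdot w w'.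

Lemma Cdot_mul_nonneg (b b' c c' : C) :
  narrow b b' -> narrow c c' -> 0 <= Cdot (b * c) (b' * c').
Proof.
  unfold narrow; rewrite !Rabs_le_between, Cdot_mul; intros. nra.
Qed.

Lemma narrow_nearer_absurd (w w' : C) : w <> 0 -> w' <> 0 -> narrow w w' ->
  Cnorm2 w <= Cnorm2 (w' - w) -> Cnorm2 w' <= Cnorm2 (w' - w) -> False.
Proof.
  unfold narrow; rewrite Rabs_le_between, Cnorm2_sub; intros Hw Hw' Hn H1 H2.
  pose proof (Cdot_Ccross_sq w w'). pose proof (Cnorm2_pos w Hw). pose proof (Cnorm2_pos w' Hw').
  set (d := Cdot w w') in *. set (c := Ccross w w') in *.
  (* The two inequalities force an angle of at least pi/3 between [w] and [w']. *)
  assert (4 * d * d <= Cnorm2 w * Cnorm2 w') by nra.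
  nra.
Qed.

(* Eight sectors of angle pi/4: four in the closed upper half-plane, their negatives below. *)
Definition upper_octant (x y : R) : nat :=
  if Rlt_dec 0 x then (if Rle_dec y x then 0 else 1)
  else (if Rle_dec (- x) y then 2 else 3).

Definition octant (w : C) : nat :=
  if Rle_dec 0 (snd w) then upper_octant (fst w) (snd w)
  else 4 + upper_octant (- fst w) (- snd w).

Lemma upper_octant_lt (x y : R) : (upper_octant x y < 4)%nat.
Proof. unfold upper_octant; repeat destruct Rlt_dec; repeat destruct Rle_dec; lia. Qed.

Lemma octant_lt (w : C) : (octant w < 8)%nat.
Proof.
  unfold octant; destruct Rle_dec;
    [pose proof (upper_octant_lt (fst w) (snd w))
    | pose proof (upper_octant_lt (- fst w) (- snd w))]; lia.
Qed.

Lemma same_upper_octant_narrow (x y x' y' : R) : 0 <= y -> 0 <= y' ->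
  (x, y) <> C0 -> (x', y') <> C0 -> upper_octant x y = upper_octant x' y' -> narrow (x, y) (x', y').
Proof.
  unfold narrow, upper_octant, Ccross, Cdot; simpl; intros Hy Hy' Hw Hw'.
  rewrite Rabs_le_between.
  destruct (Rlt_dec 0 x), (Rlt_dec 0 x'), (Rle_dec y x), (Rle_dec y' x'),
    (Rle_dec (- x) y), (Rle_dec (- x') y'); intro E; try discriminate E;
    split; nra.
Qed.

Lemma same_octant_narrow (w w' : C) : w <> 0 -> w' <> 0 -> octant w = octant w' -> narrow w w'.
Proof.
  destruct w as [x y], w' as [x' y']; unfold octant; simpl; intros Hw Hw'.
  pose proof (upper_octant_lt x y); pose proof (upper_octant_lt x' y').
  pose proof (upper_octant_lt (- x) (- y)); pose proof (upper_octant_lt (- x') (- y')).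
  destruct (Rle_dec 0 y), (Rle_dec 0 y'); intro E; try lia.
  - apply same_upper_octant_narrow; auto.
  - assert (Hn : narrow (- x, - y) (- x', - y')).
    { apply same_upper_octant_narrow; try lra; try lia;
        intro F; injection F; intros; [apply Hw | apply Hw']; f_equal; lra. }
    unfold narrow, Ccross, Cdot in *; simpl in *.
    replace (y * x' - x * y') with (- y * - x' - - x * - y') by ring.
    replace (x * x' + y * y') with (- x * - x' + - y * - y') by ring. exact Hn.
Qed.

(* Among points each nearer to [z] than to any other of them, at most one is [z]
   and no two others lie in the same octant around [z]. *)
Lemma nearer_points_length_le_9 (z : C) (L : list C) : NoDup L ->
  (forall q q', In q L -> In q' L -> q <> q' -> Cnorm2 (z - q) <= Cnorm2 (q' - q)) ->
  (length L <= 9)%nat.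
Proof.
  intros HL Hnear.
  set (sector := fun q => if Cx_eq_dec q z then 8%nat else octant (q - z)).
  assert (Hsector : forall q, (sector q < 9)%nat).
  { intro q; unfold sector; destruct Cx_eq_dec; [|pose proof (octant_lt (q - z))]; lia. }
  rewrite <- (length_map sector). change 9%nat with (length (seq 0 9)).
  apply NoDup_incl_length.
  - apply NoDup_map_NoDup_ForallPairs; auto. intros q q' Hq Hq' E.
    destruct (Cx_eq_dec q q') as [|Hne]; auto. exfalso.
    unfold sector in E; destruct (Cx_eq_dec q z), (Cx_eq_dec q' z).
    + apply Hne; congruence.
    + pose proof (octant_lt (q' - z)); lia.
    + pose proof (octant_lt (q - z)); lia.
    + apply (narrow_nearer_absurd (q - z) (q' - z)).
      * now apply Cminus_eq_contra.
      * now apply Cminus_eq_contra.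
      * apply same_octant_narrow; auto; now apply Cminus_eq_contra.
      * replace (q' - z - (q - z))%C with (q' - q)%C by ring.
        replace (q - z)%C with (- (z - q))%C by ring. rewrite Cnorm2_opp. auto.
      * replace (q' - z - (q - z))%C with (- (q - q'))%C by ring.
        replace (q' - z)%C with (- (z - q'))%C by ring. rewrite !Cnorm2_opp. auto.
  - intros n Hn. apply in_map_iff in Hn as [q [<- _]]. apply in_seq. specialize (Hsector q); lia.
Qed.

Lemma mediant_near (a b a' b' c c' : C) : b <> 0 -> b' <> 0 -> c <> 0 -> c' <> 0 ->
  narrow b b' -> narrow c c' ->
  Cnorm2 ((a * c + a' * c') / (b * c + b' * c') - a / b) <= Cnorm2 (a' / b' - a / b).
Proof.
  intros Hb Hb' Hc Hc' Hbb' Hcc'.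
  pose proof (Cdot_mul_nonneg b b' c c' Hbb' Hcc') as Hdot.
  pose proof (Cnorm2_pos (b' * c') (Cmult_neq_0 _ _ Hb' Hc')) as Hx'.
  pose proof (Cnorm2_add (b * c) (b' * c')) as Hsum.
  pose proof (Cnorm2_pos (b * c) (Cmult_neq_0 _ _ Hb Hc)).
  assert (Hden : (b * c + b' * c')%C <> 0).
  { intro E. rewrite E, Cnorm2_0 in Hsum. lra. }
  (* The deviation from [a/b] is [(a'/b' - a/b)] times the weight [b'c' / (bc + b'c')],
     whose modulus is at most 1 because [bc] and [b'c'] make an acute angle. *)
  assert (Hid : (((a * c + a' * c') / (b * c + b' * c') - a / b) * (b * c + b' * c')
                 = (a' / b' - a / b) * (b' * c'))%C) by (field; auto).
  apply (Rmult_le_reg_r (Cnorm2 (b * c + b' * c'))); [now apply Cnorm2_pos|].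
  rewrite <- Cnorm2_mul, Hid, (Cnorm2_mul (a' / b' - a / b)).
  apply Rmult_le_compat_l; [apply Cnorm2_nonneg | lra].
Qed.

Lemma mediant_map_inj (a b a' b' c1 c2 d1 d2 : C) : b <> 0 -> b' <> 0 -> (a / b)%C <> (a' / b')%C ->
  (a * c1 + a' * c2 = a * d1 + a' * d2)%C -> (b * c1 + b' * c2 = b * d1 + b' * d2)%C ->
  c1 = d1 /\ c2 = d2.
Proof.
  intros Hb Hb' Hq Ea Eb.
  assert (Hdet : (a * b' - a' * b)%C <> 0).
  { intro E. apply Hq.
    replace (a / b)%C with (a' / b' + (a * b' - a' * b) / (b * b'))%C by (field; auto).
    rewrite E. field; auto. }
  assert (E2 : ((a * b' - a' * b) * (c2 - d2))%C = 0).
  { replace ((a * b' - a' * b) * (c2 - d2))%C with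
      (a * (b * c1 + b' * c2 - (b * d1 + b' * d2)) - b * (a * c1 + a' * c2 - (a * d1 + a' * d2)))%C
      by ring.
    rewrite Ea, Eb. ring. }
  apply Cmult_integral_l in E2; auto. apply Ceq_minus in E2. subst d2.
  assert (E1 : (b * (c1 - d1))%C = 0).
  { replace (b * (c1 - d1))%C with (b * c1 + b' * c2 - (b * d1 + b' * c2))%C by ring.
    rewrite Eb. ring. }
  apply Cmult_integral_l, Ceq_minus in E1; auto.
Qed.

Fixpoint argmin {X : Type} (f : X -> R) (x : X) (l : list X) : X :=
  match l with
  | [] => x
  | y :: l' => let m := argmin f y l' in if Rle_dec (f x) (f m) then x else m
  end.

Lemma argmin_spec {X : Type} (f : X -> R) (l : list X) (x : X) :
  In (argmin f x l) (x :: l) /\ forall y, In y (x :: l) -> f (argmin f x l) <= f y.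
Proof.
  revert x; induction l as [|y l IH]; intro x; simpl.
  - split; auto. intros z [<-|[]]; lra.
  - destruct (IH y) as [Hin Hmin]. destruct Rle_dec as [Hle|Hle].
    + split; auto. intros z [<-|Hz]; [lra|]. specialize (Hmin z Hz); lra.
    + split; [destruct Hin; auto|]. intros z [<-|Hz]; [lra|auto].
Qed.

Definition quot (r : Cx * Cx) : C := (fst r / snd r)%C.

Definition partner (P : list (Cx * Cx)) (r : Cx * Cx) : Cx * Cx :=
  match filter (fun s => if Cx_eq_dec (quot s) (quot r) then false else true) P with
  | [] => r
  | s :: l => argmin (fun s => Cnorm2 (quot s - quot r)) s l
  end.

Lemma partner_spec (P : list (Cx * Cx)) (r : Cx * Cx) : (exists s, In s P /\ quot s <> quot r) ->
  In (partner P r) P /\ quot (partner P r) <> quot r /\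
  forall s, In s P -> quot s <> quot r ->
    Cnorm2 (quot (partner P r) - quot r) <= Cnorm2 (quot s - quot r).
Proof.
  intros [s0 [Hs0 Hq0]].
  assert (Hother : forall s,
    In s (filter (fun s => if Cx_eq_dec (quot s) (quot r) then false else true) P) <->
    In s P /\ quot s <> quot r).
  { intro s. rewrite filter_In. destruct Cx_eq_dec; intuition discriminate. }
  unfold partner. destruct filter as [|s l] eqn:E.
  - exfalso. apply (proj2 (Hother s0)); auto.
  - destruct (argmin_spec (fun s => Cnorm2 (quot s - quot r)) l s) as [Hin Hmin].
    apply Hother in Hin as [Hin Hq]. repeat split; auto.
    intros s' Hs' Hq'. apply Hmin, Hother; auto.
Qed.

Definition Cx_pair_eq_dec (p q : Cx * Cx) : {p = q} + {p <> q}.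
Proof. decide equality; apply Cx_eq_dec. Defined.

Definition mediant_pair (r r' : Cx * Cx) (c : Cx * Cx) : Cx * Cx :=
  ((fst r * fst c + fst r' * snd c)%C, (snd r * fst c + snd r' * snd c)%C).

Definition mediant_image (P : list (Cx * Cx)) (D : list Cx) (r : Cx * Cx) : list (Cx * Cx) :=
  map (mediant_pair r (partner P r)) (list_prod D D).

Lemma In_sumset_prodset (A C : list Cx) (a a' c c' : Cx) :
  In a A -> In a' A -> In c C -> In c' C ->
  In (a * c + a' * c')%C (sumset (prodset A C) (prodset A C)).
Proof.
  intros. apply (in_map (fun p => Cadd (fst p) (snd p)) _ (Cmul a c, Cmul a' c')).
  apply in_prod; apply (in_map (fun p => Cmul (fst p) (snd p)) _ (_, _)); apply in_prod; auto.
Qed.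

Section Incidence.

Variables (A B C D : list Cx) (P : list (Cx * Cx)).
Hypothesis HP_AB : incl P (list_prod A B).
Hypothesis HP_quot : NoDup (map quot P).
Hypothesis HP_den : forall r, In r P -> snd r <> C0.
Hypothesis HP_narrow : forall r s, In r P -> In s P -> narrow (snd r) (snd s).
Hypothesis HP_2 : (2 <= length P)%nat.
Hypothesis HD : NoDup D.
Hypothesis HD_C : incl D C.
Hypothesis HD_nz : forall c, In c D -> c <> C0.
Hypothesis HD_narrow : forall c c', In c D -> In c' D -> narrow c c'.

Lemma partner_spec_in (r : Cx * Cx) : In r P ->
  In (partner P r) P /\ quot (partner P r) <> quot r /\
  forall s, In s P -> quot s <> quot r ->
    Cnorm2 (quot (partner P r) - quot r) <= Cnorm2 (quot s - quot r).
Proof.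
  intro Hr. apply partner_spec.
  destruct P as [|r1 [|r2 l]]; simpl in HP_2; try lia.
  destruct (Cx_eq_dec (quot r1) (quot r)) as [E|E].
  - exists r2. split; [simpl; auto|]. rewrite <- E. intro F.
    inversion HP_quot as [|? ? Hx _]. apply Hx; left; auto.
  - exists r1. split; [left|]; auto.
Qed.

Lemma mediant_image_NoDup (r : Cx * Cx) : In r P -> NoDup (mediant_image P D r).
Proof.
  intro Hr. destruct (partner_spec_in r Hr) as [Hr' [Hq _]].
  apply NoDup_map_NoDup_ForallPairs; [|apply NoDup_list_prod; auto].
  intros [c1 c2] [d1 d2] _ _ E. unfold mediant_pair in E.
  pose proof (f_equal fst E) as Ea; pose proof (f_equal snd E) as Eb; cbn [fst snd] in Ea, Eb.
  destruct (mediant_map_inj (fst r) (snd r) (fst (partner P r)) (snd (partner P r))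
              c1 c2 d1 d2 (HP_den r Hr) (HP_den _ Hr') (fun F => Hq (eq_sym F)) Ea Eb).
  subst; auto.
Qed.

Lemma mediant_image_incl (r : Cx * Cx) : In r P ->
  incl (mediant_image P D r)
    (list_prod (nodup Cx_eq_dec (sumset (prodset A C) (prodset A C)))
               (nodup Cx_eq_dec (sumset (prodset B C) (prodset B C)))).
Proof.
  intros Hr y Hy. destruct (partner_spec_in r Hr) as [Hr' _].
  apply in_map_iff in Hy as [[c c'] [<- Hc]]. apply in_prod_iff in Hc as [Hc Hc'].
  apply HP_AB in Hr, Hr'. destruct r as [a b], (partner P (a, b)) as [a' b'].
  apply in_prod_iff in Hr as [Ha Hb], Hr' as [Ha' Hb'].
  apply in_prod; apply nodup_In, In_sumset_prodset; auto.
Qed.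

Lemma mediant_image_multiplicity (y : Cx * Cx) :
  (length (filter (fun r => memb Cx_pair_eq_dec y (mediant_image P D r)) P) <= 9)%nat.
Proof.
  set (Py := filter (fun r => memb Cx_pair_eq_dec y (mediant_image P D r)) P).
  assert (HPy : forall r, In r Py -> In r P /\ In y (mediant_image P D r)).
  { intros r Hr. apply filter_In in Hr as [Hr Hy]. unfold memb in Hy.
    destruct in_dec; [auto|discriminate]. }
  rewrite <- (length_map quot Py).
  apply (nearer_points_length_le_9 (fst y / snd y)%C); [apply NoDup_map_filter; auto|].
  intros q q' Hq Hq' Hne.
  apply in_map_iff in Hq as [r [<- Hr]]. apply in_map_iff in Hq' as [s [<- Hs]].
  apply HPy in Hr as [Hr Hy]. apply HPy in Hs as [Hs _].
  destruct (partner_spec_in r Hr) as [Hr' [_ Hmin]].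
  eapply Rle_trans; [|apply Hmin; auto].
  apply in_map_iff in Hy as [[c c'] [<- Hc]]. apply in_prod_iff in Hc as [Hc Hc'].
  apply mediant_near; auto.
Qed.

Lemma mediant_incidence_count :
  (length P * (length D * length D) <=
   9 * (card (sumset (prodset A C) (prodset A C)) * card (sumset (prodset B C) (prodset B C))))%nat.
Proof.
  unfold card. rewrite <- (length_prod (nodup Cx_eq_dec (sumset (prodset A C) (prodset A C)))).
  apply (incidence_bound Cx_pair_eq_dec (mediant_image P D)).
  - apply NoDup_list_prod; apply NoDup_nodup.
  - intros r Hr. repeat split.
    + apply mediant_image_NoDup; auto.
    + apply mediant_image_incl; auto.
    + unfold mediant_image. rewrite length_map, length_prod; auto.
  - intros y _. apply mediant_image_multiplicity.
Qed.

End Incidence.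

Lemma length_le_card_sumset_prodset (A C D : list Cx) : A <> nil -> ~ In C0 A ->
  NoDup D -> incl D C -> (length D <= card (sumset (prodset A C) (prodset A C)))%nat.
Proof.
  intros HA H0 HD HDC. destruct A as [|a A']; [congruence|].
  assert (Ha2 : (a + a)%C <> 0).
  { replace (a + a)%C with (a * 2)%C by ring. apply Cmult_neq_0.
    - intro E; apply H0; left; auto.
    - intro E; injection E; lra. }
  unfold card. rewrite <- (length_map (fun c : Cx => a * c + a * c)%C D).
  apply NoDup_incl_length.
  - apply NoDup_map_NoDup_ForallPairs; auto. intros c d _ _ E.
    apply Ceq_minus, (Cmult_integral_l (a + a)); auto.
    replace ((a + a) * (c - d))%C with (a * c + a * c - (a * d + a * d))%C by ring.
    rewrite E; ring.
  - intros y Hy. apply in_map_iff in Hy as [c [<- Hc]].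
    apply nodup_In, In_sumset_prodset; simpl; auto.
Qed.

Lemma narrow_classes_count (A B C D : list Cx) (P : list (Cx * Cx)) :
  A <> nil -> B <> nil -> ~ In C0 A -> ~ In C0 B ->
  incl P (list_prod A B) -> NoDup (map quot P) ->
  (forall r s, In r P -> In s P -> narrow (snd r) (snd s)) ->
  ~ In C0 C -> NoDup D -> incl D C -> (forall c c', In c D -> In c' D -> narrow c c') ->
  (length P * (length D * length D) <=
   9 * (card (sumset (prodset A C) (prodset A C)) * card (sumset (prodset B C) (prodset B C))))%nat.
Proof.
  intros HA HB H0A H0B HP_AB HP_quot HP_narrow H0C HD HD_C HD_narrow.
  destruct (Nat.le_gt_cases 2 (length P)).
  - apply mediant_incidence_count; auto.
    + intros [a b] Hr E. apply HP_AB, in_prod_iff in Hr as [_ Hb]. simpl in E; subst; auto.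
    + intros c Hc E. subst. auto.
  - assert (length D * length D <=
            card (sumset (prodset A C) (prodset A C)) *
            card (sumset (prodset B C) (prodset B C)))%nat
      by (apply Nat.mul_le_mono; apply length_le_card_sumset_prodset; auto).
    nia.
Qed.

Lemma large_narrow_filter {X : Type} (f : X -> C) (l : list X) : (forall x, In x l -> f x <> 0) ->
  exists g, (length l <= 8 * length (filter g l))%nat /\
    forall x y, In x (filter g l) -> In y (filter g l) -> narrow (f x) (f y).
Proof.
  intro Hf. destruct (pigeonhole_filter 8 (fun x => octant (f x)) l) as [j Hj];
    [intros; apply octant_lt|].
  exists (fun x => Nat.eqb (octant (f x)) j). split; auto.
  intros x y Hx Hy. apply filter_In in Hx as [Hx Ex], Hy as [Hy Ey].
  apply Nat.eqb_eq in Ex, Ey. apply same_octant_narrow; auto; congruence.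
Qed.

Lemma card_quotset (A B : list Cx) :
  card (quotset A B) = length (nodup Cx_eq_dec (map quot (list_prod A B))).
Proof.
  unfold card, quotset. do 2 f_equal. apply map_ext. intros; apply Defs_Cdiv_eq.
Qed.

Lemma scaled_count_bound (q c p d s s' : nat) :
  (q <= 8 * p)%nat -> (c <= 8 * d)%nat -> (p * (d * d) <= 9 * (s * s'))%nat ->
  INR s * INR s' >= 1 / 4608 * INR q * INR c ^ 2.
Proof.
  intros Hq Hc Hpd.
  assert (Hnat : (q * (c * c) <= 4608 * (s * s'))%nat).
  { assert (q * (c * c) <= (8 * p) * ((8 * d) * (8 * d)))%nat
      by (apply Nat.mul_le_mono; auto; apply Nat.mul_le_mono; auto).
    lia. }
  apply le_INR in Hnat. rewrite !mult_INR in Hnat.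
  replace (INR 4608) with 4608 in Hnat by (simpl; lra).
  simpl pow. lra.
Qed.

Theorem lemma2 :
  exists c : R, 0 < c /\
  forall A B C : list Cx,
    A <> nil -> B <> nil -> C <> nil ->
    ~ In C0 A -> ~ In C0 B -> ~ In C0 C ->
    INR (card (sumset (prodset A C) (prodset A C))) *
    INR (card (sumset (prodset B C) (prodset B C)))
    >= c * INR (card (quotset A B)) * INR (card C) ^ 2.
Proof.
  exists (1 / 4608). split; [lra|].
  intros A B C HA HB _ H0A H0B H0C.
  destruct (exists_transversal Cx_eq_dec quot (list_prod A B)) as [P [HP_AB [HP_quot HP_len]]].
  assert (HP_den : forall r, In r P -> snd r <> C0).
  { intros [a b] Hr E. apply HP_AB, in_prod_iff in Hr as [_ Hb]. simpl in E; subst; auto. }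
  assert (HC_nz : forall c, In c (nodup Cx_eq_dec C) -> c <> C0).
  { intros c Hc E. apply nodup_In in Hc. subst; auto. }
  destruct (large_narrow_filter (X := Cx * Cx) snd P HP_den) as [g [Hg Hg_narrow]].
  destruct (large_narrow_filter (fun c : Cx => c) _ HC_nz) as [h [Hh Hh_narrow]].
  pose proof (narrow_classes_count A B C (filter h (nodup Cx_eq_dec C)) (filter g P)
    HA HB H0A H0B (incl_tran (incl_filter g P) HP_AB) (NoDup_map_filter quot g P HP_quot)
    Hg_narrow H0C (NoDup_filter h (NoDup_nodup Cx_eq_dec C))
    (fun c Hc => proj1 (nodup_In _ _ _) (incl_filter h _ c Hc)) Hh_narrow) as Hcount.
  replace (card (quotset A B)) with (length P) by (rewrite card_quotset; auto).
  exact (scaled_count_bound _ _ _ _ _ _ Hg Hh Hcount).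
Qed.
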